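(* Let $\mathcal S_1$ and $\mathcal S_2$ be qubit spin substitutions with digit sets $\mathcal D_1,\mathcal D_2$, spin matrices $W_1,W_2$ and spin groups $G_1,G_2$. Let $\mathcal S$ be a qubit spin substitution with spin group $G=G_1\times G_2$ on a digit system $(Q,\mathcal D)$ (in any dimension) with $|\mathcal D|=|\mathcal D_1|\cdot|\mathcal D_2|$, where via a bijection $\mathcal D\to\mathcal D_1\times\mathcal D_2$, $\vec d\mapsto(\vec d_1,\vec d_2)$, the spin matrix is $W(\vec d,\vec d')=(W_1(\vec d_1,\vec d_1'),W_2(\vec d_2,\vec d_2'))$ (i.e. $W=W_1\otimes W_2$). Then: (1) $\mathcal S$ is primitive if and only if $\mathcal S_1$ and $\mathcal S_2$ are both primitive. (2) Let $\chi=\chi_1\otimes\chi_2\in\widehat{G_1\times G_2}$ with $\chi_i\in\widehat{G_i}$. Then $\mathcal S$ is $\chi$-unitary if and only if $\mathcal S_1$ is $\chi_1$-unitary and $\mathcal S_2$ is $\chi_2$-unitary; and $\mathcal S$ is $\chi$-rank-1 if and only if $\mathcal S_1$ is $\chi_1$-rank-1 and $\mathcal S_2$ is $\chi_2$-rank-1.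
   Context: A digit system $(Q,\mathcal D)$: $Q$ an expansive endomorphism of $\mathbb Z^m$, $\mathcal D$ a complete set of coset representatives of $\mathbb Z^m/Q\mathbb Z^m$. A qubit spin substitution given by $(Q,\mathcal D)$, a finite abelian group $G$ and $W:\mathcal D\times\mathcal D\to G$ has alphabet $G\times\mathcal D$ (letters $g\mathsf d$) and rule $\mathcal S(g\mathsf d,\vec d')=(gW(\vec d,\vec d'))\mathsf d'$. It is primitive if its substitution matrix $M_{\mathsf a\mathsf b}=\#\{\vec d:\mathcal S(\mathsf b,\vec d)=\mathsf a\}$ has a power with all entries positive. For $\chi\in\widehat G$, $\chi(W)=(\chi(W(\vec d,\vec d')))_{\vec d,\vec d'}$; $\mathcal S$ is $\chi$-unitary if $\frac{1}{\sqrt{|\mathcal D|}}\chi(W)$ is unitary and $\chi$-rank-1 if $\chi(W)$ has rank 1. $(\chi_1\otimes\chi_2)(g_1,g_2)=\chi_1(g_1)\chi_2(g_2)$. *)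

From HB Require Import structures.
From mathcomp Require Import all_boot all_order all_algebra all_fingroup all_solvable all_field.
Set Implicit Arguments. Unset Strict Implicit. Unset Printing Implicit Defensive.
Import Order.TTheory GRing.Theory Num.Theory.
Local Open Scope ring_scope.

Definition expansive (m : nat) (Q : 'M[int]_m) : Prop :=
  forall lam : algC, eigenvalue (map_mx intr Q) lam -> 1 < `|lam|.

Definition in_lattice (m : nat) (Q : 'M[int]_m) (v : 'cV[int]_m) : Prop :=
  exists y : 'cV[int]_m, v = Q *m y.

Definition complete_residues (m : nat) (Q : 'M[int]_m) (D : seq 'cV[int]_m) : Prop :=
  uniq D /\
  forall x : 'cV[int]_m, exists! d : 'cV[int]_m, d \in D /\ in_lattice Q (x - d).

Record digit_system := DigitSystem {
  ds_dim : nat;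
  ds_Q : 'M[int]_ds_dim;
  ds_D : seq 'cV[int]_ds_dim;
  ds_expansive : expansive ds_Q;
  ds_complete : complete_residues ds_Q ds_D }.

Definition digit (DS : digit_system) : finType := seq_sub (ds_D DS).

Record qss (G : finGroupType) := QSS {
  qss_ds : digit_system;
  qss_W : digit qss_ds -> digit qss_ds -> G }.

Definition qdigit (G : finGroupType) (S : qss G) : finType := digit (qss_ds S).
Definition letter (G : finGroupType) (S : qss G) : finType := (G * qdigit S)%type.

Definition subst_rule (G : finGroupType) (S : qss G) (a : letter S) (d' : qdigit S)
  : letter S := ((a.1 * qss_W a.2 d')%g, d').

Definition subst_matrix (G : finGroupType) (S : qss G) : 'M[int]_#|letter S| :=
  \matrix_(i, j) (#|[set d' : qdigit S | subst_rule (enum_val j) d' == enum_val i]|%:Z).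

Definition subst_primitive (G : finGroupType) (S : qss G) : Prop :=
  exists k : nat, (0 < k)%N /\ forall i j, 0 < (subst_matrix S ^+ k) i j.

Definition is_character (G : finGroupType) (chi : G -> algC) : Prop :=
  chi 1%g = 1 /\ forall x y : G, chi (x * y)%g = chi x * chi y.

Definition char_tensor (G1 G2 : finGroupType) (chi1 : G1 -> algC) (chi2 : G2 -> algC)
  : (G1 * G2)%type -> algC := fun g => chi1 g.1 * chi2 g.2.

Definition chiW (G : finGroupType) (S : qss G) (chi : G -> algC) : 'M[algC]_#|qdigit S| :=
  \matrix_(i, j) chi (qss_W (enum_val i) (enum_val j)).

Definition is_unitary (n : nat) (U : 'M[algC]_n) : Prop :=
  U *m (map_mx (@Num.conj algC) U)^T = 1%:M.

Definition chi_unitary (G : finGroupType) (S : qss G) (chi : G -> algC) : Prop :=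
  is_unitary ((sqrtC (#|qdigit S|%:R))^-1 *: chiW S chi).

Definition chi_rank1 (G : finGroupType) (S : qss G) (chi : G -> algC) : Prop :=
  \rank (chiW S chi) = 1%N.

From Pilot Require Import Defs.
From HB Require Import structures.
From mathcomp Require Import all_boot all_order all_algebra all_fingroup all_solvable all_field.
Import Order.TTheory GRing.Theory Num.Theory.
Set Implicit Arguments. Unset Strict Implicit. Unset Printing Implicit Defensive.
Local Open Scope ring_scope.

(* Via phi, a letter of S is a pair of letters of S1 and S2, and S sends one
   letter to another exactly when both components do so in S1 and S2.  Hence
   every power of the substitution matrix of S is the Kronecker product of the
   corresponding powers for S1 and S2; as these are nonnegative and stay
   positive once positive, S is primitive iff S1 and S2 are.
   Likewise chi(W) is the Kronecker product of chi1(W1) and chi2(W2), whose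
   entries are roots of unity.  Unitarity of chi(W) / sqrt |D| means that the
   Gram matrix of the rows of chi(W) is |D| times the identity; the Gram matrix
   of a Kronecker product is the Kronecker product of the Gram matrices, whose
   diagonals are the nonzero constants |D1| and |D2|, so it is scalar iff both
   factors are.  A matrix with a nonzero entry has rank one iff all its 2x2
   minors vanish, and this splits over the factors as no entry is zero. *)

Definition kron (R : comRingType) (T1 U1 T2 U2 : Type)
    (f1 : T1 -> U1 -> R) (f2 : T2 -> U2 -> R) (p : T1 * T2) (q : U1 * U2) : R :=
  f1 p.1 q.1 * f2 p.2 q.2.

Definition is_scalar_form (R : pzRingType) (T : eqType) (f : T -> T -> R) (n : R) :=
  forall a c, f a c = (a == c)%:R * n.

Definition vanishing_minors (R : pzRingType) (T U : Type) (f : T -> U -> R) :=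
  forall a b c e, f a b * f c e = f a e * f c b.

Section Kronecker.
Variable F : idomainType.

Lemma kron_scalar_formP (T1 T2 : eqType) (f1 : T1 -> T1 -> F) (f2 : T2 -> T2 -> F)
    (n1 n2 : F) (a1 : T1) (a2 : T2) :
  n1 != 0 -> n2 != 0 -> (forall a, f1 a a = n1) -> (forall a, f2 a a = n2) ->
  is_scalar_form (kron f1 f2) (n1 * n2) <->
  is_scalar_form f1 n1 /\ is_scalar_form f2 n2.
Proof.
move=> n1_neq0 n2_neq0 f1_diag f2_diag.
split=> [f_scalar | [f1_scalar f2_scalar] [a b] [c e]]; last first.
  by rewrite /kron /= f1_scalar f2_scalar mulrACA -natrM mulnb xpair_eqE.
split=> a c.
- have := f_scalar (a, a2) (c, a2).
  by rewrite /kron /= f2_diag xpair_eqE eqxx andbT mulrA => /mulIf->.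
- have := f_scalar (a1, a) (a1, c).
  by rewrite /kron /= f1_diag xpair_eqE eqxx mulrCA => /mulfI->.
Qed.

Lemma kron_vanishing_minorsP (T1 U1 T2 U2 : Type)
    (f1 : T1 -> U1 -> F) (f2 : T2 -> U2 -> F) a1 b1 a2 b2 :
  f1 a1 b1 != 0 -> f2 a2 b2 != 0 ->
  vanishing_minors (kron f1 f2) <-> vanishing_minors f1 /\ vanishing_minors f2.
Proof.
move=> f1_neq0 f2_neq0.
split=> [f_minors | [f1_minors f2_minors] p q r s]; last first.
  by rewrite /kron mulrACA f1_minors f2_minors mulrACA.
split=> a b c e.
- have := f_minors (a, a2) (b, b2) (c, a2) (e, b2).
  by rewrite /kron /= mulrACA [RHS]mulrACA => /mulIf->; rewrite ?mulf_neq0.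
- have := f_minors (a1, a) (b1, b) (a1, c) (b1, e).
  by rewrite /kron /= mulrACA [RHS]mulrACA => /mulfI->; rewrite ?mulf_neq0.
Qed.

End Kronecker.

Lemma is_scalar_form_reindex (R : pzRingType) (T T' : eqType)
    (f : T -> T -> R) (f' : T' -> T' -> R) (g : T' -> T) (n : R) :
  bijective g -> (forall i j, f' i j = f (g i) (g j)) ->
  is_scalar_form f' n <-> is_scalar_form f n.
Proof.
move=> [g' gK g'K] f'E; have g_inj := can_inj gK.
split=> [f'_scalar a c | f_scalar i j].
  by rewrite -[a]g'K -[c]g'K -f'E f'_scalar (inj_eq g_inj).
by rewrite f'E f_scalar (inj_eq g_inj).
Qed.

Lemma vanishing_minors_reindex (R : pzRingType) (T U T' U' : Type)
    (f : T -> U -> R) (f' : T' -> U' -> R) (g : T' -> T) (h : U' -> U) :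
  bijective g -> bijective h -> (forall i j, f' i j = f (g i) (h j)) ->
  vanishing_minors f' <-> vanishing_minors f.
Proof.
move=> [g' _ g'K] [h' _ h'K] f'E.
split=> [f'_minors a b c e | f_minors i j k l]; last by rewrite !f'E.
by rewrite -[a]g'K -[b]h'K -[c]g'K -[e]h'K -!f'E.
Qed.

Lemma rank1_minorsP (K : fieldType) m n (A : 'M[K]_(m, n)) i0 j0 :
  A i0 j0 != 0 -> \rank A = 1%N <-> vanishing_minors A.
Proof.
move=> A_neq0; split=> [rankA1 | A_minors].
  (* A factors through row_base A, which has \rank A = 1 row. *)
  have : (A <= row_base A)%MS by rewrite eq_row_base.
  move/mulmxKpV; move: (row_base A) (A *m pinvmx _).
  rewrite rankA1 => v u <- i j k l.
  by rewrite !mxE !big_ord1 mulrACA [RHS]mulrACA [v _ l * _]mulrC.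
have A_uv : A = \col_i A i j0 *m \row_j (A i0 j / A i0 j0).
  apply/matrixP => i j; rewrite !mxE big_ord1 !mxE.
  by rewrite mulrA -A_minors mulfK.
apply/eqP; rewrite eqn_leq; apply/andP; split.
  by rewrite A_uv (leq_trans (mxrankM_maxr _ _)) ?rank_leq_row.
by rewrite lt0n mxrank_eq0; apply: contraNneq A_neq0 => ->; rewrite mxE.
Qed.

Section Gram.
Variable C : numClosedFieldType.

Definition gram (T U : finType) (f : T -> U -> C) (a c : T) : C :=
  \sum_b f a b * (f c b)^*.

Lemma gram_kron (T1 U1 T2 U2 : finType) (f1 : T1 -> U1 -> C) (f2 : T2 -> U2 -> C) p q :
  gram (kron f1 f2) p q = kron (gram f1) (gram f2) p q.
Proof.
rewrite /gram /kron big_distrlr pair_big /=.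
by apply: eq_bigr => -[b1 b2] _; rewrite /= rmorphM mulrACA.
Qed.

Lemma gram_reindex (T U T' U' : finType) (f : T -> U -> C) (f' : T' -> U' -> C)
    (g : T' -> T) (h : U' -> U) a c :
  bijective h -> (forall i j, f' i j = f (g i) (h j)) ->
  gram f' a c = gram f (g a) (g c).
Proof.
move=> h_bij f'E; rewrite /gram (reindex h); last exact: onW_bij.
by apply: eq_bigr => b _; rewrite !f'E.
Qed.

Lemma gram_diag (T U : finType) (f : T -> U -> C) a :
  (forall b, `|f a b| = 1) -> gram f a a = #|U|%:R.
Proof.
move=> f_norm1; rewrite /gram; under eq_bigr => b _ do rewrite -normCK f_norm1 expr1n.
by rewrite sumr_const.
Qed.

End Gram.

Lemma unitary_scaledP n (A : 'M[algC]_n) : (0 < n)%N ->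
  Defs.is_unitary ((sqrtC n%:R)^-1 *: A) <-> is_scalar_form (gram A) n%:R.
Proof.
move=> n_gt0; have n_neq0 : n%:R != 0 :> algC by rewrite pnatr_eq0 -lt0n.
set s := (sqrtC n%:R)^-1.
have s_conj : s^* = s by rewrite geC0_conj // invr_ge0 sqrtC_ge0 ler0n.
have s2 : s * s = n%:R^-1 by rewrite -expr2 exprVn sqrtCK.
rewrite /Defs.is_unitary map_mxZ linearZ /= -scalemxAl -scalemxAr scalerA s_conj s2.
have gramE i j : (A *m (map_mx Num.conj A)^T) i j = gram A i j.
  by rewrite !mxE; apply: eq_bigr => k _; rewrite !mxE.
split=> [A_unitary i j | A_scalar].
  move/(congr1 ( *:%R n%:R)): A_unitary.
  rewrite scalerA mulfV // scale1r scalemx1 => AA_scalar.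
  by rewrite -gramE AA_scalar mxE mulr_natl.
apply/matrixP => i j.
by rewrite [LHS]mxE gramE A_scalar mxE mulrCA mulVf // mulr1.
Qed.

Lemma card_digit_gt0 (DS : digit_system) : (0 < #|digit DS|)%N.
Proof.
have [d [[d_in _] _]] := (ds_complete DS).2 0.
by apply/card_gt0P; exists (SeqSub d_in).
Qed.

Lemma card_digit_neq0 (R : numDomainType) (DS : digit_system) :
  #|digit DS|%:R != 0 :> R.
Proof. by rewrite pnatr_eq0 -lt0n card_digit_gt0. Qed.

Section SubstitutionPowers.
Variables (G : finGroupType) (S : qss G).

Definition subst_pow (k : nat) (a b : letter S) : int :=
  (subst_matrix S ^+ k) (enum_rank a) (enum_rank b).

Lemma subst_matrixE (a b : letter S) :
  subst_matrix S (enum_rank a) (enum_rank b) = (subst_rule b a.2 == a)%:R.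
Proof.
rewrite mxE !enum_rankK.
have -> : [set d | subst_rule b d == a] =
          if subst_rule b a.2 == a then [set a.2] else set0.
  apply/setP => d; rewrite inE; have [-> | d_neq] := eqVneq d a.2.
    by case: ifP => h; rewrite !inE ?h ?eqxx.
  have -> : (subst_rule b d == a) = false by apply: contraNF d_neq => /eqP <-.
  by case: ifP; rewrite ?inE ?(negbTE d_neq).
by case: ifP; rewrite ?cards1 ?cards0.
Qed.

Lemma subst_pow0 a b : subst_pow 0 a b = (a == b)%:R.
Proof. by rewrite /subst_pow expr0 mxE (inj_eq enum_rank_inj). Qed.

Lemma subst_powS k a b :
  subst_pow k.+1 a b = \sum_c subst_pow k a c * (subst_rule b c.2 == c)%:R.
Proof.
rewrite /subst_pow exprSr -mulmxE mxE (reindex (@enum_rank _)).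
  by apply: eq_bigr => c _; rewrite subst_matrixE.
exact/onW_bij/enum_rank_bij.
Qed.

Lemma subst_pow_ge0 k a b : 0 <= subst_pow k a b.
Proof.
elim: k a b => [|k IHk] a b; first by rewrite subst_pow0.
by rewrite subst_powS sumr_ge0 // => c _; rewrite mulr_ge0.
Qed.

(* Positivity persists since the column of every letter b has a nonzero
   entry, at the letter subst_rule b b.2. *)
Lemma subst_pow_gt0S k :
  (forall a b, 0 < subst_pow k a b) -> forall a b, 0 < subst_pow k.+1 a b.
Proof.
move=> pow_gt0 a b; rewrite subst_powS (bigD1 (subst_rule b b.2)) //= eqxx mulr1.
by rewrite ltr_wpDr ?pow_gt0 // sumr_ge0 // => c _; rewrite mulr_ge0 ?subst_pow_ge0.
Qed.

Lemma subst_pow_gt0D k j :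
  (forall a b, 0 < subst_pow k a b) -> forall a b, 0 < subst_pow (k + j) a b.
Proof.
move=> pow_gt0; elim: j => [|j IHj]; first by rewrite addn0.
by rewrite addnS; apply: subst_pow_gt0S.
Qed.

Lemma subst_primitiveP :
  subst_primitive S <-> exists2 k, (0 < k)%N & forall a b, 0 < subst_pow k a b.
Proof.
split=> [[k [k_gt0 pow_gt0]] | [k k_gt0 pow_gt0]].
  by exists k => // a b; apply: pow_gt0.
exists k; split=> // i j.
by rewrite -(enum_valK i) -(enum_valK j); apply: pow_gt0.
Qed.

End SubstitutionPowers.
Arguments subst_pow {G} S k a b.

Section Characters.
Variables (G : finGroupType) (chi : G -> algC).
Hypothesis chi_char : is_character chi.

Lemma character_expg g n : chi (g ^+ n)%g = chi g ^+ n.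
Proof.
elim: n => [|n IHn]; first by rewrite expg0 expr0 chi_char.1.
by rewrite expgS chi_char.2 IHn exprS.
Qed.

Lemma norm_character g : `|chi g| = 1.
Proof.
apply/eqP; rewrite -(pexpr_eq1 (order_gt0 g)) // -normrX -character_expg.
by rewrite expg_order chi_char.1 normr1.
Qed.

Lemma character_neq0 g : chi g != 0.
Proof. by rewrite -normr_eq0 norm_character oner_eq0. Qed.

End Characters.

Lemma char_tensor_character (G1 G2 : finGroupType)
    (chi1 : G1 -> algC) (chi2 : G2 -> algC) :
  is_character chi1 -> is_character chi2 -> is_character (char_tensor chi1 chi2).
Proof.
move=> [chi1_1 chi1M] [chi2_1 chi2M].
split=> [|x y]; rewrite /char_tensor ?chi1_1 ?chi2_1 ?mulr1 //.
by rewrite chi1M chi2M mulrACA.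
Qed.

Definition chiW_fun (G : finGroupType) (S : qss G) (chi : G -> algC)
    (d d' : qdigit S) : algC :=
  chi (qss_W d d').
Arguments chiW_fun {G} S chi d d'.

Section SpinMatrix.
Variables (G : finGroupType) (S : qss G) (chi : G -> algC).

Lemma chiWE i j : chiW S chi i j = chiW_fun S chi (enum_val i) (enum_val j).
Proof. by rewrite mxE. Qed.

Lemma chi_unitaryP :
  chi_unitary S chi <-> is_scalar_form (gram (chiW_fun S chi)) #|qdigit S|%:R.
Proof.
apply: iff_trans (unitary_scaledP _ (card_digit_gt0 _)) _.
apply: is_scalar_form_reindex (@enum_val_bij _) _ => i j.
exact: gram_reindex (@enum_val_bij _) chiWE.
Qed.

Lemma chi_rank1P : is_character chi ->
  chi_rank1 S chi <-> vanishing_minors (chiW_fun S chi).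
Proof.
move=> chi_char; have /card_gt0P[d _] := card_digit_gt0 (qss_ds S).
apply: iff_trans (rank1_minorsP (i0 := enum_rank d) (j0 := enum_rank d) _) _.
  by rewrite mxE character_neq0.
exact: vanishing_minors_reindex (@enum_val_bij _) (@enum_val_bij _) chiWE.
Qed.

Lemma gram_chiW_fun_diag : is_character chi ->
  forall d, gram (chiW_fun S chi) d d = #|qdigit S|%:R.
Proof. by move=> chi_char d; apply: gram_diag => d'; apply: norm_character. Qed.

End SpinMatrix.

Section ProductSubstitution.
Variables (G1 G2 : finGroupType) (S1 : qss G1) (S2 : qss G2) (S : qss (G1 * G2)%type).
Variables (phi : qdigit S -> qdigit S1 * qdigit S2)
          (phi' : qdigit S1 * qdigit S2 -> qdigit S).
Hypotheses (phiK : cancel phi phi') (phi'K : cancel phi' phi).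
Hypothesis W_split : forall d d' : qdigit S,
  qss_W d d' = (qss_W (phi d).1 (phi d').1, qss_W (phi d).2 (phi d').2).

Definition split_letter (a : letter S) : letter S1 * letter S2 :=
  ((a.1.1, (phi a.2).1), (a.1.2, (phi a.2).2)).

Definition merge_letter (xy : letter S1 * letter S2) : letter S :=
  ((xy.1.1, xy.2.1), phi' (xy.1.2, xy.2.2)).

Lemma split_letterK : cancel split_letter merge_letter.
Proof. by case=> -[g1 g2] d; rewrite /merge_letter /= -surjective_pairing phiK. Qed.

Lemma merge_letterK : cancel merge_letter split_letter.
Proof. by case=> -[g1 d1] [g2 d2]; rewrite /split_letter /= phi'K. Qed.

Lemma subst_rule_split (a b : letter S) :
  (subst_rule b a.2 == a) =
  (subst_rule (split_letter b).1 (split_letter a).1.2 == (split_letter a).1) &&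
  (subst_rule (split_letter b).2 (split_letter a).2.2 == (split_letter a).2).
Proof.
case: a b => [[g1 g2] d] [[h1 h2] e].
by rewrite /subst_rule /= W_split !xpair_eqE !eqxx !andbT.
Qed.

Lemma subst_pow_split k a b :
  subst_pow S k a b =
  kron (subst_pow S1 k) (subst_pow S2 k) (split_letter a) (split_letter b).
Proof.
elim: k b => [|k IHk] b.
  by rewrite /kron !subst_pow0 -natrM mulnb -xpair_eqE (can_eq split_letterK).
rewrite subst_powS (reindex merge_letter); last first.
  exact/onW_bij/(Bijective merge_letterK split_letterK).
rewrite /kron !subst_powS big_distrlr pair_big.
apply: eq_bigr => -[x y] _; rewrite IHk subst_rule_split merge_letterK.
by rewrite -mulnb natrM mulrACA.
Qed.

Lemma subst_pow_split_gt0 k a b :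
  (0 < subst_pow S k a b) =
  (0 < subst_pow S1 k (split_letter a).1 (split_letter b).1) &&
  (0 < subst_pow S2 k (split_letter a).2 (split_letter b).2).
Proof. by rewrite subst_pow_split mulr_ge0_gt0 ?subst_pow_ge0. Qed.

Lemma subst_primitive_split :
  subst_primitive S <-> subst_primitive S1 /\ subst_primitive S2.
Proof.
have /card_gt0P[d1 _] := card_digit_gt0 (qss_ds S1).
have /card_gt0P[d2 _] := card_digit_gt0 (qss_ds S2).
split=> [/subst_primitiveP[k k_gt0 pow_gt0] | ].
  split; apply/subst_primitiveP; exists k => // x x'.
    have := pow_gt0 (merge_letter (x, (1%g, d2))) (merge_letter (x', (1%g, d2))).
    by rewrite subst_pow_split_gt0 !merge_letterK => /andP[].
  have := pow_gt0 (merge_letter ((1%g, d1), x)) (merge_letter ((1%g, d1), x')).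
  by rewrite subst_pow_split_gt0 !merge_letterK => /andP[].
case=> /subst_primitiveP[k1 k1_gt0 pow1_gt0] /subst_primitiveP[k2 k2_gt0 pow2_gt0].
apply/subst_primitiveP; exists (k1 + k2)%N => [|a b]; first by rewrite addn_gt0 k1_gt0.
rewrite subst_pow_split_gt0 subst_pow_gt0D //.
by rewrite addnC subst_pow_gt0D.
Qed.

Variables (chi1 : G1 -> algC) (chi2 : G2 -> algC).
Hypotheses (chi1_char : is_character chi1) (chi2_char : is_character chi2).

Let phi_bij : bijective phi := Bijective phiK phi'K.

Lemma chiW_fun_split d d' :
  chiW_fun S (char_tensor chi1 chi2) d d' =
  kron (chiW_fun S1 chi1) (chiW_fun S2 chi2) (phi d) (phi d').
Proof. by rewrite /chiW_fun W_split. Qed.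

Lemma chi_unitary_split : #|qdigit S| = (#|qdigit S1| * #|qdigit S2|)%N ->
  chi_unitary S (char_tensor chi1 chi2) <-> chi_unitary S1 chi1 /\ chi_unitary S2 chi2.
Proof.
move=> card_S.
have /card_gt0P[d1 _] := card_digit_gt0 (qss_ds S1).
have /card_gt0P[d2 _] := card_digit_gt0 (qss_ds S2).
have gram_split a c : gram (chiW_fun S (char_tensor chi1 chi2)) a c =
    kron (gram (chiW_fun S1 chi1)) (gram (chiW_fun S2 chi2)) (phi a) (phi c).
  by rewrite (gram_reindex _ _ phi_bij chiW_fun_split) gram_kron.
apply: iff_trans (chi_unitaryP _ _) _; rewrite card_S natrM.
apply: iff_trans (is_scalar_form_reindex _ phi_bij gram_split) _.
apply: iff_trans (kron_scalar_formP d1 d2 (card_digit_neq0 _ _) (card_digit_neq0 _ _)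
  (gram_chiW_fun_diag chi1_char) (gram_chiW_fun_diag chi2_char)) _.
by split=> -[/chi_unitaryP-unitary1 /chi_unitaryP-unitary2].
Qed.

Lemma chi_rank1_split :
  chi_rank1 S (char_tensor chi1 chi2) <-> chi_rank1 S1 chi1 /\ chi_rank1 S2 chi2.
Proof.
have /card_gt0P[d1 _] := card_digit_gt0 (qss_ds S1).
have /card_gt0P[d2 _] := card_digit_gt0 (qss_ds S2).
apply: iff_trans (chi_rank1P _ (char_tensor_character chi1_char chi2_char)) _.
apply: iff_trans (vanishing_minors_reindex phi_bij phi_bij chiW_fun_split) _.
have entry1_neq0 : chiW_fun S1 chi1 d1 d1 != 0 := character_neq0 chi1_char _.
have entry2_neq0 : chiW_fun S2 chi2 d2 d2 != 0 := character_neq0 chi2_char _.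
apply: iff_trans (kron_vanishing_minorsP entry1_neq0 entry2_neq0) _.
by split=> -[/(chi_rank1P _ chi1_char)-rank1_1 /(chi_rank1P _ chi2_char)-rank1_2].
Qed.

End ProductSubstitution.

Unset Implicit Arguments.

Theorem proposition5p3 (G1 G2 : finGroupType)
  (hG1 : abelian [set: G1]) (hG2 : abelian [set: G2])
  (S1 : qss G1) (S2 : qss G2) (S : qss (G1 * G2)%type)
  (phi : qdigit S -> (qdigit S1 * qdigit S2)%type) (phi_bij : bijective phi)
  (hcard : #|qdigit S| = (#|qdigit S1| * #|qdigit S2|)%N)
  (hW : forall d d' : qdigit S,
      qss_W d d' = (qss_W (phi d).1 (phi d').1, qss_W (phi d).2 (phi d').2)) :
  (subst_primitive S <-> subst_primitive S1 /\ subst_primitive S2) /\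
  (forall (chi1 : G1 -> algC) (chi2 : G2 -> algC),
      is_character chi1 -> is_character chi2 ->
      (chi_unitary S (char_tensor chi1 chi2) <-> chi_unitary S1 chi1 /\ chi_unitary S2 chi2) /\
      (chi_rank1 S (char_tensor chi1 chi2) <-> chi_rank1 S1 chi1 /\ chi_rank1 S2 chi2)).
Proof.
have [phi' phiK phi'K] := phi_bij.
split; first exact (subst_primitive_split phiK phi'K hW).
move=> chi1 chi2 chi1_char chi2_char; split.
  exact (chi_unitary_split phiK phi'K hW chi1_char chi2_char hcard).
exact (chi_rank1_split phiK phi'K hW chi1_char chi2_char).
Qed.
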